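(* Let $(V,e)$ be a unital $\ast$-normed space and $S_2=V_{he}^\ast\cap2\operatorname{ball}V^\ast$. Then $\operatorname{ball}V$ is equivalent to $S_2^\circ$, i.e. $rS_2^\circ\subseteq\operatorname{ball}V\subseteq RS_2^\circ$ for some $r,R>0$.
   Context: A $\ast$-normed space is a complex vector space with involution and norm satisfying $\|v^\ast\|=\|v\|$; $V^\ast$ has involution $\langle v,\varphi^\ast\rangle=\overline{\langle v^\ast,\varphi\rangle}$, $V_h^\ast$ is the set of hermitian bounded functionals, and for nonzero hermitian $e$, $V_{he}^\ast=\{y\in V_h^\ast:\langle e,y\rangle=1\}$. $(V,e)$ is a unital $\ast$-normed space if $V_{he}^\ast\cap\operatorname{ball}V^\ast\ne\varnothing$. For $A\subseteq V^\ast$, $A^\circ=\{v\in V:|\langle v,a\rangle|\le1\ \forall a\in A\}$. *)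

From HB Require Import structures.
From mathcomp Require Import all_boot all_order all_algebra.
From mathcomp Require Import all_classical all_reals all_analysis.
From mathcomp Require Import complex.
Set Implicit Arguments. Unset Strict Implicit. Unset Printing Implicit Defensive.
Import Order.TTheory GRing.Theory Num.Theory.
Import numFieldNormedType.Exports.
Local Open Scope ring_scope.
Local Open Scope classical_set_scope.

(* A *-normed space is a normed space V over K[i] (norm ||.|| = `|.|,
   valued in K[i] but real nonnegative) with a conjugate-linear
   involution  star  satisfying ||star v|| = ||v||. *)
Definition is_star_normed (K : realType) (V : normedModType K[i])
  (star : V -> V) : Prop :=
  [/\ forall v, star (star v) = v,
      forall u v, star (u + v) = star u + star v,
      forall (a : K[i]) v, star (a *: v) = (conjc a) *: star v
    & forall v, `|star v| = `|v| ].

Definition bounded_functional (K : realType) (V : normedModType K[i])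
  (f : V -> K[i]) : Prop :=
  (forall (a : K[i]) u v, f (a *: u + v) = a * f u + f v) /\
  exists M : K, forall v, `|f v| <= M%:C%C * `|v|.

Definition dual_star (K : realType) (V : normedModType K[i])
  (star : V -> V) (f : V -> K[i]) : V -> K[i] :=
  fun v => conjc (f (star v)).

Definition hermitian_functional (K : realType) (V : normedModType K[i])
  (star : V -> V) (f : V -> K[i]) : Prop :=
  bounded_functional f /\ dual_star star f = f.

Definition Vhe (K : realType) (V : normedModType K[i])
  (star : V -> V) (e : V) : set (V -> K[i]) :=
  [set f | hermitian_functional star f /\ f e = 1].

(* t * ball V^* : functionals with operator norm <= t, i.e.
   sup_{||v||<=1} |f v| <= t, equivalently |f v| <= t ||v|| for all v. *)
Definition dual_ball (K : realType) (V : normedModType K[i]) (t : K)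
  : set (V -> K[i]) :=
  [set f | bounded_functional f /\ forall v, `|f v| <= t%:C%C * `|v|].

Definition unit_ball (K : realType) (V : normedModType K[i]) : set V :=
  [set v | `|v| <= 1].

Definition polar (K : realType) (V : normedModType K[i])
  (A : set (V -> K[i])) : set V :=
  [set v | forall a, A a -> `|a v| <= 1].

Definition scale_set (K : realType) (V : normedModType K[i]) (t : K)
  (A : set V) : set V := [set t%:C%C *: v | v in A].

Definition unital_star_normed (K : realType) (V : normedModType K[i])
  (star : V -> V) (e : V) : Prop :=
  [/\ is_star_normed star, e != 0, star e = e
    & exists y, Vhe star e y /\ @dual_ball K V 1 y].

From HB Require Import structures.
From mathcomp Require Import all_boot all_order all_algebra.
From mathcomp Require Import all_classical all_reals all_analysis.
From mathcomp Require Import complex.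
From mathcomp Require Import ring lra.
Set Implicit Arguments. Unset Strict Implicit. Unset Printing Implicit Defensive.
Import Order.TTheory GRing.Theory Num.Theory.
Import numFieldNormedType.Exports.
Local Open Scope ring_scope.
Local Open Scope classical_set_scope.
Local Open Scope complex_scope.

(* Every f in S2 has norm at most 2, so ball V is inside 2 S2°.  Conversely,
   fix a state y (hermitian, y e = 1, ||y|| <= 1).  For a hermitian psi of norm
   at most 1, psi e is real because e is hermitian, so
   f := y + (psi - psi(e) y) / (1 + ||e||) is again a state of norm at most 2;
   evaluating f and y at v in S2° gives |psi v| <= 3 (1 + ||e||).  A norming
   functional phi for v (Hahn-Banach, via Zorn's lemma on graphs of dominated
   real-linear functionals, then complexification) splits as h1 + i h2 with
   h1, h2 hermitian of norm at most 1, whence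
   ||v|| = Re (phi v) <= 6 (1 + ||e||). *)

Section RealNorm.
Variables (K : realType) (V : normedZmodType K[i]).

(* Norms are valued in K[i] with zero imaginary part; rnorm reads them in K. *)
Definition rnorm (v : V) : K := complex.Re `|v|.

Lemma rnormE v : `|v| = (rnorm v)%:C.
Proof. by rewrite [LHS]complexE (ger0_Im (normr_ge0 v)) mulr0 addr0. Qed.

Lemma rnorm_ge0 v : 0 <= rnorm v.
Proof. by rewrite -ler0c -rnormE. Qed.

Lemma ler_rnormD u v : rnorm (u + v) <= rnorm u + rnorm v.
Proof. by have := ler_normD u v; rewrite !rnormE -rmorphD lecR. Qed.

Lemma rnormN v : rnorm (- v) = rnorm v.
Proof. by rewrite /rnorm normrN. Qed.

Lemma rnorm0 : rnorm 0 = 0.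
Proof. by rewrite /rnorm normr0. Qed.

Lemma lec1_rnorm v : (`|v| <= 1) = (rnorm v <= 1).
Proof. by rewrite rnormE -lecR. Qed.

End RealNorm.

Lemma lec_rnormM (K : realType) (V W : normedZmodType K[i]) (v : V) (t : K) (w : W) :
  (`|v| <= t%:C * `|w|) = (rnorm v <= t * rnorm w).
Proof. by rewrite !rnormE -rmorphM lecR. Qed.

Section ComplexRealNorm.
Variable K : realType.
Implicit Types (x y z : K[i]) (t : K).

Lemma conjcD x y : conjc (x + y) = conjc x + conjc y.
Proof. exact: rmorphD. Qed.

Lemma conjcB x y : conjc (x - y) = conjc x - conjc y.
Proof. exact: rmorphB. Qed.

Lemma conjcM x y : conjc (x * y) = conjc x * conjc y.
Proof. exact: rmorphM. Qed.

Lemma rnormM x y : rnorm (x * y) = rnorm x * rnorm y.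
Proof. by apply: complexI; rewrite rmorphM -!rnormE normrM. Qed.

Lemma rnormC t : rnorm t%:C = `|t|.
Proof. by rewrite /rnorm normc_def /= expr0n addr0 sqrtr_sqr. Qed.

Lemma rnormJ z : rnorm (conjc z) = rnorm z.
Proof. by rewrite /rnorm normcJ. Qed.

Lemma rnormi : rnorm ('i%C : K[i]) = 1.
Proof. by rewrite /rnorm normc_def /= expr0n add0r expr1n sqrtr1. Qed.

Lemma ler_Re_rnorm z : complex.Re z <= rnorm z.
Proof. by apply: le_trans (ler_norm _) _; rewrite -lecR -rnormE normc_ge_Re. Qed.

Lemma Re_mulJ z : complex.Re (conjc z * z) = rnorm z ^+ 2.
Proof. by rewrite mulrC -sqr_normc rnormE -rmorphXn. Qed.

End ComplexRealNorm.

Lemma rnormZ (K : realType) (V : normedModType K[i]) (a : K[i]) (v : V) :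
  rnorm (a *: v) = rnorm a * rnorm v.
Proof. by have := normrZ a v; rewrite !rnormE -rmorphM => -[]. Qed.

Section RealHahnBanach.
Variables (K : realType) (V : normedModType K[i]).

Definition real_linear (g : V -> K) :=
  forall (t : K) u v, g (t%:C *: u + v) = t * g u + g v.

Lemma real_linearD (g : V -> K) u v : real_linear g -> g (u + v) = g u + g v.
Proof. by move=> glin; have := glin 1 u v; rewrite scale1r mul1r. Qed.

Lemma real_linearZ (g : V -> K) t u : real_linear g -> g (t%:C *: u) = t * g u.
Proof.
move=> glin; have g0 : g 0 = 0.
  by have := glin (-1) 0 0; rewrite scaler0 addr0 mulN1r addNr.
by have := glin t u 0; rewrite addr0 g0 addr0.
Qed.

Definition dominated_graph (A : set (V * K)) :=
  [/\ forall x a b, A (x, a) -> A (x, b) -> a = b,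
      forall t x y a b, A (x, a) -> A (y, b) -> A (t%:C *: x + y, t * a + b)
    & forall x a, A (x, a) -> a <= rnorm x].

Lemma dominated_graph0 A : dominated_graph A -> A !=set0 -> A (0, 0).
Proof.
move=> [_ Alin _] [[x a] Axa].
by have := Alin (-1) _ _ _ _ Axa Axa; rewrite rmorphN1 scaleN1r mulN1r !addNr.
Qed.

Lemma dominated_graph_bigcup (F : set (set (V * K))) :
  F `<=` dominated_graph -> total_on F subset ->
  dominated_graph (\bigcup_(X in F) X).
Proof.
move=> Fdom Ftot.
have common X1 X2 p1 p2 : F X1 -> F X2 -> X1 p1 -> X2 p2 ->
    exists2 Z, F Z & Z p1 /\ Z p2.
  move=> F1 F2 h1 h2; case: (Ftot X1 X2 F1 F2) => sub.
    by exists X2 => //; split => //; exact: sub.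
  by exists X1 => //; split => //; exact: sub.
split.
- move=> x a b [X1 F1 h1] [X2 F2 h2].
  have [Z FZ [Z1 Z2]] := common _ _ _ _ F1 F2 h1 h2.
  by have [Zfun _ _] := Fdom Z FZ; exact: Zfun Z1 Z2.
- move=> t x y a b [X1 F1 h1] [X2 F2 h2].
  have [Z FZ [Z1 Z2]] := common _ _ _ _ F1 F2 h1 h2.
  by have [_ Zlin _] := Fdom Z FZ; exists Z => //; exact: Zlin.
- by move=> x a [X FX h]; have [_ _ Xdom] := Fdom X FX; exact: Xdom.
Qed.

Lemma dominated_graph_line v0 :
  dominated_graph [set p | exists t : K, p = (t%:C *: v0, t * rnorm v0)].
Proof.
split.
- move=> x a b [t [-> ->]] [s [ets ->]].
  have [->|v0n] := eqVneq v0 0; first by rewrite rnorm0 !mulr0.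
  have : (t - s)%:C *: v0 == 0 by rewrite rmorphB scalerBl ets subrr.
  rewrite scaler_eq0 (negbTE v0n) orbF => /eqP [/eqP].
  by rewrite subr_eq0 => /eqP ->.
- move=> r x y a b [t [-> ->]] [s [-> ->]].
  exists (r * t + s); congr pair; last by rewrite mulrDl mulrA.
  by rewrite rmorphD rmorphM scalerDl scalerA.
- move=> x a [t [-> ->]]; rewrite rnormZ rnormC.
  by apply: ler_wpM2r; [exact: rnorm_ge0 | exact: ler_norm].
Qed.

End RealHahnBanach.

Section OneStepExtension.
Variables (K : realType) (V : normedModType K[i]) (A : set (V * K)) (w : V).
Hypotheses (Adom : dominated_graph A) (A00 : A (0, 0)).

Let Ascale t x a : A (x, a) -> A (t%:C *: x, t * a).
Proof.
have [_ Alin _] := Adom => Axa.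
by have := Alin t _ _ _ _ Axa A00; rewrite !addr0.
Qed.

(* Take c := sup {a - |x - w| | A (x, a)}; it lies below every |y + w| - b
   since a + b <= |x + y| <= |x - w| + |y + w|. *)
Lemma exists_extension_value : exists c : K,
  (forall x a, A (x, a) -> a - rnorm (x - w) <= c) /\
  (forall y b, A (y, b) -> c <= rnorm (y + w) - b).
Proof.
have [_ Alin Ale] := Adom.
pose S := [set z | exists x a, A (x, a) /\ z = a - rnorm (x - w)].
have Sub y b : A (y, b) -> ubound S (rnorm (y + w) - b).
  move=> Ayb _ [x [a [Axa ->]]].
  have := Alin 1 _ _ _ _ Axa Ayb; rewrite rmorph1 scale1r mul1r => /Ale.
  have := ler_rnormD (x - w) (y + w); rewrite addrA addrAC subrK; lra.
have S0 : S !=set0 by exists (0 - rnorm (0 - w)), 0, 0.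
have supS : has_sup S by split => //; exists (rnorm (0 + w) - 0); exact: Sub.
exists (sup S); split.
- by move=> x a Axa; apply: sup_upper_bound => //; exists x, a.
- by move=> y b Ayb; apply: ge_sup => //; exact: Sub.
Qed.

(* Rescaling by |t| reduces domination at x + t w to the two bounds on c. *)
Lemma extension_value_le (c : K) :
  (forall x a, A (x, a) -> a - rnorm (x - w) <= c) ->
  (forall y b, A (y, b) -> c <= rnorm (y + w) - b) ->
  forall x a t, A (x, a) -> a + t * c <= rnorm (x + t%:C *: w).
Proof.
have [_ _ Ale] := Adom => cge cle x a t Axa.
have [t0|t0|->] := ltgtP t 0; last by rewrite mul0r scale0r !addr0; exact: Ale.
- have s0 : 0 < - t by rewrite oppr_gt0.
  have tn0 : - t != 0 by rewrite gt_eqF.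
  have := cge _ _ (Ascale (- t)^-1 Axa).
  have -> : x + t%:C *: w = (- t)%:C *: ((- t)^-1%:C *: x - w).
    by rewrite scalerBr scalerA -rmorphM mulfV // rmorphN scaleNr opprK scale1r.
  rewrite rnormZ rnormC gtr0_norm // -(ler_pM2l s0) mulrBr mulrA.
  by rewrite mulfV // mul1r mulNr; lra.
- have tn0 : t != 0 by rewrite gt_eqF.
  have := cle _ _ (Ascale t^-1 Axa).
  have -> : x + t%:C *: w = t%:C *: (t^-1%:C *: x + w).
    by rewrite scalerDr scalerA -rmorphM mulfV // scale1r.
  rewrite rnormZ rnormC gtr0_norm // -(ler_pM2l t0) mulrBr mulrA mulfV // mul1r.
  lra.
Qed.

Hypothesis wA : ~ exists a, A (w, a).

Lemma dominated_graph_extend : exists2 B, A `<` B & dominated_graph B.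
Proof.
have [Afun Alin _] := Adom.
have [c [cge cle]] := exists_extension_value.
exists [set p | exists x a t, A (x, a) /\ p = (x + t%:C *: w, a + t * c)].
  split=> [[x a] Axa|AB]; first by exists x, a, 0; rewrite scale0r mul0r !addr0.
  apply: wA; exists c; apply: AB.
  by exists 0, 0, 1; rewrite scale1r mul1r !add0r.
split.
- move=> _ a1 a2 [x [a [t [Axa [-> ->]]]]] [y [b [s [Ayb [exy ->]]]]].
  have [ets|nts] := eqVneq t s.
    move: Axa exy; rewrite ets => Axa /addIr exy.
    by rewrite exy in Axa; rewrite (Afun _ _ _ Axa Ayb).
  exfalso; apply: wA; exists ((t - s)^-1 * (b - a)).
  have -> : w = (t - s)^-1%:C *: (y - x).
    have <- : (t - s)%:C *: w = y - x.
      apply/eqP; rewrite rmorphB scalerBl subr_eq addrAC -exy.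
      by rewrite [x + _]addrC addrK.
    by rewrite scalerA -rmorphM mulVf ?subr_eq0 // scale1r.
  apply: Ascale; have := Alin (-1) _ _ _ _ Axa Ayb.
  by rewrite rmorphN1 scaleN1r mulN1r addrC [- a + b]addrC.
- move=> r _ _ _ _ [x [a [t [Axa [-> ->]]]]] [y [b [s [Ayb [-> ->]]]]].
  exists (r%:C *: x + y), (r * a + b), (r * t + s); split; first exact: Alin.
  congr pair; last by rewrite mulrDr mulrDl mulrA; lra.
  by rewrite rmorphD rmorphM scalerDl -scalerA scalerDr addrACA.
- by move=> _ _ [x [a [t [Axa [-> ->]]]]]; exact: extension_value_le.
Qed.

End OneStepExtension.

Theorem real_hahn_banach (K : realType) (V : normedModType K[i]) (v0 : V) :
  exists2 g : V -> K, real_linear g &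
    (forall v, g v <= rnorm v) /\ g v0 = rnorm v0.
Proof.
pose P A := dominated_graph A /\ (A = set0 \/ A (v0, rnorm v0)).
have [A [[Adom Av0] Amax]] : exists A, P A /\ forall B, A `<` B -> ~ P B.
  apply: Zorn_bigcup => F FP Ftot; split.
    by apply: dominated_graph_bigcup => // X /FP [].
  have [[p [X FX Xp]]|Fempty] := pselect ((\bigcup_(X in F) X) !=set0).
    by right; have [_ [X0|]] := FP X FX; [rewrite X0 in Xp | exists X].
  by left; apply/seteqP; split => // p Fp; apply: Fempty; exists p.
pose L := [set p | exists t : K, p = (t%:C *: v0, t * rnorm v0)].
have {}Av0 : A (v0, rnorm v0).
  case: Av0 => // A0; exfalso; apply: (Amax L).
    by rewrite A0; split => // /(_ (0, 0)) []; exists 0; rewrite scale0r mul0r.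
  by split; [exact: dominated_graph_line | right; exists 1; rewrite scale1r mul1r].
have A00 : A (0, 0) by apply: dominated_graph0 => //; exists (v0, rnorm v0).
have Atotal x : exists a, A (x, a).
  apply: contrapT => Ax; have [B AB Bdom] := dominated_graph_extend Adom A00 Ax.
  by apply: (Amax B AB); split => //; right; exact: AB.1.
have [g Ag] := choice Atotal.
have [Afun Alin Ale] := Adom.
exists g; first by move=> t x y; apply: Afun (Ag _) _; exact: Alin.
by split=> [v|]; [exact: Ale | exact: Afun (Ag _) Av0].
Qed.

Section Complexification.
Variables (K : realType) (V : normedModType K[i]).
Implicit Types (g : V -> K) (f : V -> K[i]).

Definition complex_linear (f : V -> K[i]) :=
  forall (a : K[i]) u v, f (a *: u + v) = a * f u + f v.

Lemma complex_linearZ f a u : complex_linear f -> f (a *: u) = a * f u.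
Proof.
move=> flin; have f0 : f 0 = 0.
  by have := flin (-1) 0 0; rewrite scaler0 addr0 mulN1r addNr.
by have := flin a u 0; rewrite addr0 f0 addr0.
Qed.

Definition complexify (g : V -> K) (v : V) : K[i] :=
  (g v)%:C - 'i%C * (g ('i%C *: v))%:C.

Lemma Re_complexify g v : complex.Re (complexify g v) = g v.
Proof. by rewrite /complexify /=; ring. Qed.

Lemma complexify_linear g : real_linear g -> complex_linear (complexify g).
Proof.
move=> glin a u w; set p := complex.Re a; set q := complex.Im a.
have ea : a *: u = p%:C *: u + q%:C *: ('i%C *: u).
  by rewrite scalerA -scalerDl mulrC -complexE.
have eia : 'i%C *: (a *: u) = (- q)%:C *: u + p%:C *: ('i%C *: u).
  rewrite ea scalerDr !scalerA addrC; congr (_ + _); last by rewrite mulrC.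
  by rewrite mulrAC -expr2 sqr_i mulN1r rmorphN.
rewrite /complexify scalerDr eia ea !real_linearD // !real_linearZ //.
rewrite [a in RHS]complexE -/p -/q.
apply/eqP; rewrite eq_complex /=; apply/andP; split; apply/eqP; ring.
Qed.

(* Testing against conj z *: v, where z = complexify g v, turns the real bound
   into |z|^2 <= |z| |v|. *)
Lemma rnorm_complexify_le g : real_linear g -> (forall v, g v <= rnorm v) ->
  forall v, rnorm (complexify g v) <= rnorm v.
Proof.
move=> glin gle v; set z := complexify g v.
have := gle (conjc z *: v).
rewrite -Re_complexify complex_linearZ; last exact: complexify_linear.
rewrite Re_mulJ rnormZ rnormJ expr2.
have [z0|zn0] := eqVneq (rnorm z) 0; first by rewrite z0 rnorm_ge0.
by rewrite ler_pM2l // lt0r zn0 rnorm_ge0.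
Qed.

Lemma exists_norming_functional v : exists2 f : V -> K[i], complex_linear f &
  (forall w, rnorm (f w) <= rnorm w) /\ complex.Re (f v) = rnorm v.
Proof.
have [g glin [gle gv]] := real_hahn_banach v.
exists (complexify g); first exact: complexify_linear.
by split; [exact: rnorm_complexify_le | rewrite Re_complexify].
Qed.

End Complexification.

Section HermitianPart.
Variables (K : realType) (V : normedModType K[i]) (star : V -> V).
Implicit Types (f : V -> K[i]) (v : V).

Definition hermitian_part f v : K[i] := (f v + conjc (f (star v))) / 2.

Lemma hermitian_part_decomposition f v :
  f v = hermitian_part f v + 'i%C * hermitian_part (fun w => - 'i%C * f w) v.
Proof.
have conjNi : conjc (- 'i%C) = 'i%C :> K[i] by rewrite /conjc /= oppr0 opprK.
rewrite /hermitian_part conjcM conjNi.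
set x := f v; set y := conjc (f (star v)).
have -> : 'i%C * ((- 'i%C * x + 'i%C * y) / 2) = 'i%C ^+ 2 * (y - x) / 2 by ring.
by rewrite sqr_i; field.
Qed.

Lemma hermitian_functionalJ f v :
  hermitian_functional star f -> conjc (f (star v)) = f v.
Proof. by move=> [_ fstar]; rewrite -{2}fstar. Qed.

Hypothesis star_normed : is_star_normed star.

Lemma hermitian_part_linear f :
  complex_linear f -> complex_linear (hermitian_part f).
Proof.
have [_ starD starZ _] := star_normed => flin a u w.
by rewrite /hermitian_part starD starZ !flin !conjcD !conjcM conjcK; ring.
Qed.

Lemma dual_star_hermitian_part f :
  dual_star star (hermitian_part f) = hermitian_part f.
Proof.
have [starK _ _ _] := star_normed; apply: boolp.funext => v.
rewrite /dual_star /hermitian_part starK conjcM conjcD conjcK.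
by rewrite conjc_inv conjc_nat; ring.
Qed.

Lemma rnorm_hermitian_part_le f : (forall v, rnorm (f v) <= rnorm v) ->
  forall v, rnorm (hermitian_part f v) <= rnorm v.
Proof.
have [_ _ _ starN] := star_normed => fle v.
have rnorm_half : rnorm (2^-1 : K[i]) = 2^-1.
  have -> : (2^-1 : K[i]) = (2^-1 : K)%:C by rewrite fmorphV rmorph_nat.
  by rewrite rnormC ger0_norm.
have rnorm_star : rnorm (star v) = rnorm v by rewrite /rnorm starN.
have := ler_rnormD (f v) (conjc (f (star v))); rewrite rnormJ.
have := fle (star v); have := fle v.
by rewrite rnorm_star /hermitian_part rnormM rnorm_half; lra.
Qed.

Lemma hermitian_part_hermitian f : complex_linear f ->
  (forall v, rnorm (f v) <= rnorm v) -> hermitian_functional star (hermitian_part f).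
Proof.
move=> flin fle; split; last exact: dual_star_hermitian_part.
split; first exact: hermitian_part_linear.
by exists 1 => v; rewrite lec_rnormM mul1r; exact: rnorm_hermitian_part_le.
Qed.

End HermitianPart.

Section PolarOfStates.
Variables (K : realType) (V : normedModType K[i]) (star : V -> V) (e : V).
Variable y : V -> K[i].
Hypothesis star_normed : is_star_normed star.
Hypotheses (star_e : star e = e) (y_herm : hermitian_functional star y).
Hypotheses (y_e : y e = 1) (y_le : forall w, rnorm (y w) <= rnorm w).

Local Notation S2 := (Vhe star e `&` @dual_ball K V 2).

Lemma state_in_S2 : S2 y.
Proof.
split; first by [].
split; first by case: y_herm.
by move=> w; rewrite lec_rnormM; have := y_le w; have := rnorm_ge0 w; lra.
Qed.

Definition perturbed_state (psi : V -> K[i]) (w : V) : K[i] :=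
  y w + (1 + rnorm e)^-1%:C * (psi w - psi e * y w).

Lemma perturbed_state_in_S2 psi : hermitian_functional star psi ->
  (forall w, rnorm (psi w) <= rnorm w) -> S2 (perturbed_state psi).
Proof.
move=> psi_herm psi_le; have [[psi_lin _] _] := psi_herm.
have [[y_lin _] _] := y_herm.
have e0 : 0 < 1 + rnorm e by have := rnorm_ge0 e; lra.
have psi_e : conjc (psi e) = psi e.
  by rewrite -[in LHS]star_e (hermitian_functionalJ _ psi_herm).
have lin : complex_linear (perturbed_state psi).
  by move=> a u w; rewrite /perturbed_state y_lin psi_lin; ring.
have le2 w : rnorm (perturbed_state psi w) <= 2 * rnorm w.
  have : rnorm (psi w - psi e * y w) * (1 + rnorm e)^-1 <= rnorm w.
    rewrite -ler_pdivlMr ?invr_gt0 // invrK mulrDr mulr1 [rnorm w * _]mulrC.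
    have := ler_rnormD (psi w) (- (psi e * y w)); rewrite rnormN rnormM.
    have : rnorm (psi e) * rnorm (y w) <= rnorm e * rnorm w.
      by apply: ler_pM; rewrite ?rnorm_ge0.
    by have := psi_le w; lra.
  have := ler_rnormD (y w) ((1 + rnorm e)^-1%:C * (psi w - psi e * y w)).
  rewrite rnormM rnormC gtr0_norm ?invr_gt0 // [_^-1 * _]mulrC.
  by have := y_le w; lra.
have bounded : bounded_functional (perturbed_state psi).
  by split=> //; exists 2 => w; rewrite lec_rnormM; exact: le2.
split; last by split=> // w; rewrite lec_rnormM; exact: le2.
split; last by rewrite /perturbed_state y_e mulr1 subrr mulr0 addr0.
split=> //; apply: boolp.funext => w.
rewrite /dual_star /perturbed_state conjcD conjcM conjcB conjcM conjc_real.
by rewrite (hermitian_functionalJ _ y_herm) !(hermitian_functionalJ _ psi_herm) psi_e.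
Qed.

Lemma rnorm_hermitian_le_of_polar psi v : hermitian_functional star psi ->
  (forall w, rnorm (psi w) <= rnorm w) -> polar S2 v ->
  rnorm (psi v) <= 3 * (1 + rnorm e).
Proof.
move=> psi_herm psi_le v_polar.
have e0 : 0 < 1 + rnorm e by have := rnorm_ge0 e; lra.
have := v_polar _ (perturbed_state_in_S2 psi_herm psi_le).
have := v_polar _ state_in_S2; rewrite !lec1_rnorm => yv fv.
have -> : psi v = (1 + rnorm e)%:C * (perturbed_state psi v - y v) + psi e * y v.
  rewrite /perturbed_state addrAC subrr add0r mulrA -rmorphM.
  by rewrite mulfV ?gt_eqF // mul1r subrK.
apply: le_trans (ler_rnormD _ _) _.
rewrite !rnormM rnormC gtr0_norm //.
have : rnorm (perturbed_state psi v - y v) <= 2.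
  by have := ler_rnormD (perturbed_state psi v) (- y v); rewrite rnormN; lra.
have : rnorm (psi e) * rnorm (y v) <= rnorm e.
  by rewrite -[rnorm e]mulr1; apply: ler_pM; rewrite ?rnorm_ge0.
have := rnorm_ge0 e; nra.
Qed.

Lemma rnorm_le_of_polar v : polar S2 v -> rnorm v <= 6 * (1 + rnorm e).
Proof.
move=> v_polar; have [f f_lin [f_le f_v]] := exists_norming_functional v.
pose g w := - 'i%C * f w.
have g_lin : complex_linear g by move=> a u w; rewrite /g f_lin; ring.
have g_le w : rnorm (g w) <= rnorm w by rewrite rnormM rnormN rnormi mul1r.
have hf := rnorm_hermitian_le_of_polar (hermitian_part_hermitian star_normed f_lin f_le)
  (rnorm_hermitian_part_le star_normed f_le) v_polar.
have hg := rnorm_hermitian_le_of_polar (hermitian_part_hermitian star_normed g_lin g_le)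
  (rnorm_hermitian_part_le star_normed g_le) v_polar.
rewrite -f_v (hermitian_part_decomposition star f v).
apply: le_trans (ler_Re_rnorm _) _; apply: le_trans (ler_rnormD _ _) _.
by rewrite rnormM rnormi mul1r; lra.
Qed.
End PolarOfStates.

Section PolarBalls.
Variables (K : realType) (V : normedModType K[i]) (S : set (V -> K[i])).

Lemma scale_polar_sub_unit_ball (M : K) : 0 < M ->
  (forall v, polar S v -> rnorm v <= M) -> scale_set M^-1 (polar S) `<=` @unit_ball K V.
Proof.
move=> M0 polar_le _ [v /polar_le v_le <-].
rewrite /unit_ball /= lec1_rnorm rnormZ rnormC gtr0_norm ?invr_gt0 //.
by rewrite mulrC ler_pdivrMr // mul1r.
Qed.

Lemma unit_ball_sub_scale_polar (t : K) : 0 < t ->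
  S `<=` dual_ball t -> @unit_ball K V `<=` scale_set t (polar S).
Proof.
move=> t0 S_le v; rewrite /unit_ball /= lec1_rnorm => v_le1.
exists (t^-1%:C *: v); last by rewrite scalerA -rmorphM mulfV ?gt_eqF // scale1r.
move=> f /S_le [[f_lin _] f_le].
have : rnorm (f v) <= t by have := f_le v; rewrite lec_rnormM; have := rnorm_ge0 v; nra.
rewrite lec1_rnorm complex_linearZ // rnormM rnormC gtr0_norm ?invr_gt0 //.
by rewrite mulrC ler_pdivrMr // mul1r.
Qed.

End PolarBalls.

Theorem lemma4p2 (K : realType) (V : normedModType K[i]) (star : V -> V) (e : V) :
  unital_star_normed star e ->
  let S2 := Vhe star e `&` @dual_ball K V 2 in
  exists r R : K, 0 < r /\ 0 < R /\
    scale_set r (polar S2) `<=` @unit_ball K V /\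
    @unit_ball K V `<=` scale_set R (polar S2).
Proof.
move=> [star_normed _ star_e [y [[y_herm y_e] [_ y_le]]]] S2.
have M0 : 0 < 6 * (1 + rnorm e) by have := rnorm_ge0 e; lra.
exists (6 * (1 + rnorm e))^-1, 2; split; first by rewrite invr_gt0.
do 2!split=> //.
- apply: scale_polar_sub_unit_ball => //.
  apply: rnorm_le_of_polar star_normed star_e y_herm y_e _ => w.
  by have := y_le w; rewrite lec_rnormM mul1r.
- by apply: unit_ball_sub_scale_polar => // f [].
Qed.
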